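(* Let $m$ be a positive integer. If $\|m\alpha\|\ge\|q_{k-1}\alpha\|+\|q_k\alpha\|$ for some $k\ge1$, then $\mathrm{ab}_\alpha(m)<q_k$.
   Context: $\alpha\in(0,1)$ irrational, $\alpha=[0;a_1,a_2,\ldots]$ with positive integers $a_i$, $a_1\ge2$; $q_{-1}=0$, $q_0=1$, $q_1=a_1$, $q_k=a_kq_{k-1}+q_{k-2}$ ($k\ge2$). $\|x\|$ is the distance from $x$ to the nearest integer. Sturmian words of slope $\alpha$: with $R(\rho)=\{\rho+\alpha\}$ on $[0,1)$ and either $I_0=[0,1-\alpha)$ or $I_0=(0,1-\alpha]$ ($I_1$ its complement), $\mathbf{s}_{\rho,\alpha}$ has $n$-th letter $0$ iff $R^n(\rho)\in I_0$; they share a set $\mathcal{L}_\alpha$ of finite factors. An abelian power of period $m$ and exponent $e$ is a concatenation of $e$ pairwise abelian equivalent words (same numbers of $0$s and $1$s) of length $m$; $\mathrm{ab}_\alpha(m)$ is the maximum exponent of an abelian power of period $m$ in $\mathcal{L}_\alpha$ (it is known that $\mathrm{ab}_\alpha(m)=\lfloor 1/\|m\alpha\|\rfloor$). *)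

From Stdlib Require Import Reals Lra Lia ZArith Arith List.
Open Scope R_scope.

(* fractional part {x} = x - floor x  (Stdlib: Int_part is the floor) *)
Definition frac (x : R) : R := frac_part x.

Definition nint_dist (x : R) : R := Rmin (frac x) (1 - frac x).

Definition irrational (x : R) : Prop :=
  forall (p : Z) (q : nat), (q > 0)%nat -> x <> IZR p / INR q.

(* Continued fraction expansion alpha = [0; a_1, a_2, ...] via the Gauss map:
   x_0 = alpha, x_{k+1} = {1 / x_k}, a_{k+1} = floor (1 / x_k). *)
Fixpoint gauss_iter (alpha : R) (k : nat) : R :=
  match k with
  | O => alpha
  | S k' => frac (1 / gauss_iter alpha k')
  end.

(* partial quotient a_k (k >= 1); a_0 = 0 since alpha in (0,1) *)
Definition cf_a (alpha : R) (k : nat) : nat :=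
  match k with
  | O => O
  | S k' => Z.to_nat (Int_part (1 / gauss_iter alpha k'))
  end.

(* qpair k = (q_{k-1}, q_k), with q_{-1} = 0, q_0 = 1, q_k = a_k q_{k-1} + q_{k-2} *)
Fixpoint cf_qpair (alpha : R) (k : nat) : nat * nat :=
  match k with
  | O => (0%nat, 1%nat)
  | S k' => let (p, q) := cf_qpair alpha k' in (q, (cf_a alpha (S k') * q + p)%nat)
  end.

Definition cf_q (alpha : R) (k : nat) : nat := snd (cf_qpair alpha k).

(* Sturmian word s_{rho,alpha}; letters: false = 0, true = 1.
   Letter n is 0 iff R^n(rho) = {rho + n alpha} lies in I_0, where
   I_0 = [0, 1-alpha) if right_closed = false, and I_0 = (0, 1-alpha] otherwise. *)
Definition in_I0 (alpha : R) (right_closed : bool) (y : R) : Prop :=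
  if right_closed then 0 < y /\ y <= 1 - alpha else 0 <= y /\ y < 1 - alpha.

Definition in_I0_dec (alpha : R) (right_closed : bool) (y : R) :
  {in_I0 alpha right_closed y} + {~ in_I0 alpha right_closed y}.
Proof.
  unfold in_I0; destruct right_closed.
  - destruct (Rlt_dec 0 y); destruct (Rle_dec y (1 - alpha)); intuition.
  - destruct (Rle_dec 0 y); destruct (Rlt_dec y (1 - alpha)); intuition.
Defined.

Definition sturmian_letter (rho alpha : R) (right_closed : bool) (n : nat) : bool :=
  if in_I0_dec alpha right_closed (frac (rho + INR n * alpha)) then false else true.

Definition in_L (alpha : R) (w : list bool) : Prop :=
  exists (rho : R) (right_closed : bool) (i : nat),
    (0 <= rho < 1)%R /\
    w = map (sturmian_letter rho alpha right_closed) (List.seq i (length w)).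

Definition abelian_equiv (u v : list bool) : Prop :=
  count_occ Bool.bool_dec u false = count_occ Bool.bool_dec v false /\
  count_occ Bool.bool_dec u true = count_occ Bool.bool_dec v true.

Definition abelian_power (m e : nat) (w : list bool) : Prop :=
  exists blocks : list (list bool),
    length blocks = e /\
    Forall (fun u => length u = m) blocks /\
    (forall u v, In u blocks -> In v blocks -> abelian_equiv u v) /\
    w = concat blocks.

From Stdlib Require Import Reals List Lra Lia ZArith.
Open Scope R_scope.

(* Write delta_k = q_k alpha - p_k for the convergents p_k / q_k.  The
   continuant recurrences give the determinant identity
   q_k delta_{k-1} - q_{k-1} delta_k = (-1)^(k+1), and the Gauss map gives
   delta_k = - x_k delta_{k-1} with 0 < x_k < 1 (irrationality keeps x_k away
   from 0).  Hence |delta_k| <= alpha <= 1/2, so ||q_k alpha|| = |delta_k|, and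
   since q_{k-1} <= q_k the determinant identity yields
   q_k (||q_{k-1} alpha|| + ||q_k alpha||) >= 1; the hypothesis then gives
   q_k ||m alpha|| >= 1.
   On the other hand a factor of length L of a Sturmian word of slope alpha
   contains a number of 1s at distance < 1 from L alpha.  An abelian power of
   exponent e made of blocks of length m with c ones each is such a factor with
   e c ones, so e |m alpha - c| < 1, whence e ||m alpha|| < 1 and e < q_k. *)

Lemma frac_range (x : R) : 0 <= frac x < 1.
Proof. unfold frac; destruct (base_fp x); lra. Qed.

Lemma frac_IZR_add (z : Z) (r : R) : 0 <= r < 1 -> frac (IZR z + r) = r.
Proof.
  intros Hr. symmetry. exact (proj2 (Int_part_frac_part_spec _ z r Hr eq_refl)).
Qed.

Lemma frac_id (r : R) : 0 <= r < 1 -> frac r = r.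
Proof. intros Hr. rewrite <- (Rplus_0_l r) at 1. exact (frac_IZR_add 0 r Hr). Qed.

Lemma frac_add_lt (y a : R) : 0 <= a -> frac y + a < 1 -> frac (y + a) = frac y + a.
Proof.
  intros Ha Hsum. destruct (frac_range y). assert (Ha' : frac a = a) by (apply frac_id; lra).
  unfold frac in *. rewrite plus_frac_part2; lra.
Qed.

Lemma frac_add_ge (y a : R) : a < 1 -> 1 <= frac y + a -> frac (y + a) = frac y + a - 1.
Proof.
  intros Ha Hsum. destruct (frac_range y). assert (Ha' : frac a = a) by (apply frac_id; lra).
  unfold frac in *. rewrite plus_frac_part1; lra.
Qed.

Lemma nint_dist_le_dist (x : R) (z : Z) : nint_dist x <= Rabs (x - IZR z).
Proof.
  unfold nint_dist. destruct (frac_range x).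
  pose proof (Rplus_Int_part_frac_part x : x = IZR (Int_part x) + frac x) as Hx.
  destruct (Z_le_gt_dec z (Int_part x)) as [Hz|Hz].
  - apply IZR_le in Hz.
    apply Rle_trans with (frac x); [apply Rmin_l|]. rewrite Rabs_pos_eq; lra.
  - assert (Hz1 : IZR (Int_part x) + 1 <= IZR z)
      by (rewrite <- plus_IZR; apply IZR_le; lia).
    apply Rle_trans with (1 - frac x); [apply Rmin_r|]. rewrite Rabs_left1; lra.
Qed.

Lemma nint_dist_IZR_add (z : Z) (d : R) : Rabs d <= 1/2 -> nint_dist (IZR z + d) = Rabs d.
Proof.
  intros Hd. unfold nint_dist. destruct (Rle_or_lt 0 d) as [Hpos|Hneg].
  - rewrite Rabs_pos_eq in * by lra. rewrite frac_IZR_add by lra.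
    apply Rmin_left. lra.
  - rewrite Rabs_left in * by lra.
    replace (IZR z + d) with (IZR (z - 1) + (1 + d)) by (rewrite minus_IZR; ring).
    rewrite frac_IZR_add by lra. rewrite Rmin_right by lra. ring.
Qed.

Section Continuants.
Variable alpha : R.

(* (p_{k-1}, p_k), with p_{-1} = 1 and p_0 = 0. *)
Fixpoint cf_ppair (k : nat) : nat * nat :=
  match k with
  | O => (1%nat, 0%nat)
  | S k' => let (p, q) := cf_ppair k' in (q, (cf_a alpha (S k') * q + p)%nat)
  end.

Definition cf_p (k : nat) : nat := snd (cf_ppair k).

(* delta_k = q_k alpha - p_k, and delta_{k-1}, which is -1 at k = 0. *)
Definition cf_delta (k : nat) : R := INR (cf_q alpha k) * alpha - INR (cf_p k).

Definition cf_delta_prev (k : nat) : R :=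
  INR (fst (cf_qpair alpha k)) * alpha - INR (fst (cf_ppair k)).

Lemma cf_q_S (k : nat) :
  cf_q alpha (S k) = (cf_a alpha (S k) * cf_q alpha k + fst (cf_qpair alpha k))%nat.
Proof. unfold cf_q; simpl. destruct (cf_qpair alpha k); reflexivity. Qed.

Lemma cf_qpair_fst_S (k : nat) : fst (cf_qpair alpha (S k)) = cf_q alpha k.
Proof. unfold cf_q; simpl. destruct (cf_qpair alpha k); reflexivity. Qed.

Lemma cf_p_S (k : nat) :
  cf_p (S k) = (cf_a alpha (S k) * cf_p k + fst (cf_ppair k))%nat.
Proof. unfold cf_p; simpl. destruct (cf_ppair k); reflexivity. Qed.

Lemma cf_ppair_fst_S (k : nat) : fst (cf_ppair (S k)) = cf_p k.
Proof. unfold cf_p; simpl. destruct (cf_ppair k); reflexivity. Qed.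

Lemma cf_delta_prev_S (k : nat) : cf_delta_prev (S k) = cf_delta k.
Proof. unfold cf_delta_prev, cf_delta. rewrite cf_qpair_fst_S, cf_ppair_fst_S. reflexivity. Qed.

Lemma cf_delta_S (k : nat) :
  cf_delta (S k) = INR (cf_a alpha (S k)) * cf_delta k + cf_delta_prev k.
Proof.
  unfold cf_delta, cf_delta_prev. rewrite cf_q_S, cf_p_S, !plus_INR, !mult_INR. ring.
Qed.

Lemma cf_det (k : nat) :
  INR (cf_q alpha k) * cf_delta_prev k - INR (fst (cf_qpair alpha k)) * cf_delta k
  = (-1) ^ S k.
Proof.
  induction k as [|k IH].
  - unfold cf_delta_prev, cf_delta, cf_q, cf_p; simpl. ring.
  - rewrite cf_delta_prev_S, cf_delta_S, cf_qpair_fst_S, cf_q_S, plus_INR, mult_INR.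
    transitivity (- (INR (cf_q alpha k) * cf_delta_prev k
                     - INR (fst (cf_qpair alpha k)) * cf_delta k)); [ring|].
    rewrite IH. simpl. ring.
Qed.

End Continuants.

Section GaussMap.
Variable alpha : R.
Hypothesis alpha_range : 0 < alpha < 1.

Lemma gauss_iter_range (k : nat) : 0 <= gauss_iter alpha k < 1.
Proof. destruct k as [|k]; [simpl; lra | apply frac_range]. Qed.

Lemma one_lt_inv_gauss_iter (k : nat) :
  gauss_iter alpha k <> 0 -> 1 < 1 / gauss_iter alpha k.
Proof.
  intros Hx. pose proof (gauss_iter_range k).
  unfold Rdiv. rewrite Rmult_1_l, <- Rinv_1. apply Rinv_lt_contravar; lra.
Qed.

Lemma cf_a_S (k : nat) :
  gauss_iter alpha k <> 0 ->
  INR (cf_a alpha (S k)) = 1 / gauss_iter alpha k - gauss_iter alpha (S k).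
Proof.
  intros Hx. pose proof (one_lt_inv_gauss_iter k Hx).
  destruct (base_Int_part (1 / gauss_iter alpha k)).
  assert (Hz : (0 <= Int_part (1 / gauss_iter alpha k))%Z) by (apply le_IZR; lra).
  simpl. unfold frac, frac_part. rewrite INR_IZR_INZ, Z2Nat.id by exact Hz. ring.
Qed.

Lemma cf_a_S_pos (k : nat) : gauss_iter alpha k <> 0 -> (1 <= cf_a alpha (S k))%nat.
Proof.
  intros Hx. pose proof (cf_a_S k Hx) as Ha. pose proof (one_lt_inv_gauss_iter k Hx).
  pose proof (gauss_iter_range (S k)).
  apply INR_lt. change (INR 0) with 0. lra.
Qed.

Lemma cf_q_le_S (k : nat) : gauss_iter alpha k <> 0 -> (cf_q alpha k <= cf_q alpha (S k))%nat.
Proof. intros Hx. pose proof (cf_a_S_pos k Hx). rewrite cf_q_S. nia. Qed.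

Lemma alpha_le_half : (2 <= cf_a alpha 1)%nat -> alpha <= 1/2.
Proof.
  intros Ha1. apply le_INR in Ha1.
  assert (Hx0 : gauss_iter alpha 0 <> 0) by (simpl; lra).
  pose proof (cf_a_S 0 Hx0) as Ha. pose proof (gauss_iter_range 1).
  change (gauss_iter alpha 0) with alpha in Ha. change (INR 2) with 2 in Ha1.
  assert (Hinv : 2 <= 1 / alpha) by lra.
  assert (alpha * (1 / alpha) = 1) by (field; lra).
  nra.
Qed.

End GaussMap.

Section IrrationalSlope.
Variable alpha : R.
Hypothesis alpha_range : 0 < alpha < 1.
Hypothesis alpha_irrational : irrational alpha.

Lemma cf_delta_neq0 (k : nat) : (0 < cf_q alpha k)%nat -> cf_delta alpha k <> 0.
Proof.
  intros Hq H0. apply (alpha_irrational (Z.of_nat (cf_p alpha k)) (cf_q alpha k) Hq).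
  rewrite <- INR_IZR_INZ. unfold cf_delta in H0.
  assert (INR (cf_q alpha k) <> 0) by (apply not_0_INR; lia).
  field_simplify_eq; [lra | assumption].
Qed.

Lemma cf_invariant (k : nat) :
  gauss_iter alpha k <> 0 /\
  cf_delta alpha k = - gauss_iter alpha k * cf_delta_prev alpha k /\
  (0 < cf_q alpha k)%nat.
Proof.
  induction k as [|k IH].
  - unfold cf_delta, cf_delta_prev, cf_q, cf_p; simpl. repeat split; [lra | ring | lia].
  - destruct IH as (Hx & Hd & Hq).
    assert (Hd' : cf_delta alpha (S k)
                  = - gauss_iter alpha (S k) * cf_delta_prev alpha (S k)).
    { rewrite cf_delta_prev_S, cf_delta_S, (cf_a_S alpha alpha_range k Hx), Hd.
      field. exact Hx. }
    assert (Hq' : (0 < cf_q alpha (S k))%nat)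
      by (pose proof (cf_q_le_S alpha alpha_range k Hx); lia).
    repeat split; [| exact Hd' | exact Hq'].
    intros H0. apply (cf_delta_neq0 (S k) Hq'). rewrite Hd', H0. ring.
Qed.

Lemma gauss_iter_neq0 (k : nat) : gauss_iter alpha k <> 0.
Proof. exact (proj1 (cf_invariant k)). Qed.

Lemma cf_q_prev_le (k : nat) : (fst (cf_qpair alpha k) <= cf_q alpha k)%nat.
Proof.
  destruct k as [|k]; [simpl; lia|].
  rewrite cf_qpair_fst_S. exact (cf_q_le_S alpha alpha_range k (gauss_iter_neq0 k)).
Qed.

Lemma cf_delta_abs_le (k : nat) : Rabs (cf_delta alpha k) <= alpha.
Proof.
  induction k as [|k IH].
  - unfold cf_delta, cf_q, cf_p; simpl. rewrite Rabs_pos_eq; lra.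
  - destruct (cf_invariant (S k)) as (_ & Hd & _).
    pose proof (gauss_iter_range alpha alpha_range (S k)).
    pose proof (Rabs_pos (cf_delta alpha k)).
    rewrite Hd, cf_delta_prev_S, Rabs_mult, Rabs_Ropp, (Rabs_pos_eq (gauss_iter _ _)) by lra.
    nra.
Qed.

Lemma nint_dist_cf_q (k : nat) :
  alpha <= 1/2 -> nint_dist (INR (cf_q alpha k) * alpha) = Rabs (cf_delta alpha k).
Proof.
  intros Hhalf. pose proof (cf_delta_abs_le k).
  replace (INR (cf_q alpha k) * alpha)
    with (IZR (Z.of_nat (cf_p alpha k)) + cf_delta alpha k)
    by (unfold cf_delta; rewrite <- INR_IZR_INZ; ring).
  apply nint_dist_IZR_add. lra.
Qed.

Lemma cf_q_dist_sum_ge1 (k : nat) :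
  1 <= INR (cf_q alpha k) * (Rabs (cf_delta_prev alpha k) + Rabs (cf_delta alpha k)).
Proof.
  pose proof (f_equal Rabs (cf_det alpha k)) as Hdet. rewrite pow_1_abs in Hdet.
  pose proof (le_INR _ _ (cf_q_prev_le k)) as Hle.
  pose proof (Rabs_pos (cf_delta alpha k)).
  rewrite <- Hdet. unfold Rminus.
  eapply Rle_trans; [apply Rabs_triang|].
  rewrite Rabs_Ropp, !Rabs_mult, !(Rabs_pos_eq (INR _)) by apply pos_INR.
  nra.
Qed.

End IrrationalSlope.

(* The fractional part of y, but taken in (0, 1] rather than [0, 1) for the
   right-closed partition: with this choice the letter read at y is 1 exactly
   when adding alpha wraps around. *)
Definition sturm_frac (right_closed : bool) (y : R) : R :=
  if right_closed then (if Req_EM_T (frac y) 0 then 1 else frac y) else frac y.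

Lemma sturm_frac_add (alpha : R) (rc : bool) (y : R) :
  0 < alpha < 1 ->
  sturm_frac rc (y + alpha)
  = sturm_frac rc y + alpha - (if in_I0_dec alpha rc (frac y) then 0 else 1).
Proof.
  intros Ha. destruct (frac_range y). unfold sturm_frac.
  destruct (Rlt_or_le (frac y + alpha) 1) as [Hlt|Hge];
    [rewrite frac_add_lt by lra | rewrite frac_add_ge by lra];
    destruct (in_I0_dec alpha rc (frac y)) as [Hin|Hout]; unfold in_I0 in *;
    destruct rc; repeat destruct Req_EM_T; try lra;
    exfalso; apply Hout; split; lra.
Qed.

Lemma sturm_frac_dist (rc : bool) (y y' : R) : Rabs (sturm_frac rc y - sturm_frac rc y') < 1.
Proof.
  destruct (frac_range y), (frac_range y'). unfold sturm_frac.
  apply Rabs_def1; destruct rc; repeat destruct Req_EM_T; lra.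
Qed.

Definition ones (u : list bool) : nat := count_occ Bool.bool_dec u true.

Lemma sturmian_ones_factor (alpha rho : R) (rc : bool) (n L : nat) :
  0 < alpha < 1 ->
  sturm_frac rc (rho + INR (n + L) * alpha)
  = sturm_frac rc (rho + INR n * alpha) + INR L * alpha
    - INR (ones (map (sturmian_letter rho alpha rc) (seq n L))).
Proof.
  intros Ha. revert n. induction L as [|L IH]; intros n.
  - rewrite Nat.add_0_r. simpl. ring.
  - replace (n + S L)%nat with (S n + L)%nat by lia.
    rewrite IH, S_INR.
    replace (rho + (INR n + 1) * alpha) with (rho + INR n * alpha + alpha) by ring.
    rewrite sturm_frac_add by exact Ha.
    unfold ones; simpl map; unfold sturmian_letter.
    destruct in_I0_dec.
    + rewrite count_occ_cons_neq by discriminate. rewrite S_INR. ring.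
    + rewrite count_occ_cons_eq, !S_INR by reflexivity. ring.
Qed.

Lemma sturmian_factor_balanced (alpha rho : R) (rc : bool) (n L : nat) :
  0 < alpha < 1 ->
  Rabs (INR (ones (map (sturmian_letter rho alpha rc) (seq n L))) - INR L * alpha) < 1.
Proof.
  intros Ha.
  pose proof (sturm_frac_dist rc (rho + INR n * alpha) (rho + INR (n + L) * alpha)) as Hdist.
  rewrite sturmian_ones_factor in Hdist by exact Ha.
  apply Rabs_def2 in Hdist as [Hlo Hhi]. apply Rabs_def1; lra.
Qed.

Lemma in_L_balanced (alpha : R) (w : list bool) :
  0 < alpha < 1 -> in_L alpha w -> Rabs (INR (ones w) - INR (length w) * alpha) < 1.
Proof.
  intros Ha (rho & rc & n & _ & Hw).
  rewrite Hw at 1. exact (sturmian_factor_balanced alpha rho rc n (length w) Ha).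
Qed.

Lemma additive_concat_const {A : Type} (f : list A -> nat) (bs : list (list A)) (c : nat) :
  f nil = 0%nat -> (forall u v, f (u ++ v) = (f u + f v)%nat) ->
  Forall (fun u => f u = c) bs -> f (concat bs) = (length bs * c)%nat.
Proof.
  intros Hnil Happ Hbs. induction Hbs as [|u bs Hu _ IH]; [exact Hnil|].
  simpl. rewrite Happ, Hu, IH. reflexivity.
Qed.

Lemma abelian_power_ones (m e : nat) (w : list bool) :
  abelian_power m e w -> exists c, length w = (e * m)%nat /\ ones w = (e * c)%nat.
Proof.
  intros (bs & Hlen & Hlens & Hab & ->). subst e.
  destruct bs as [|b bs]; [exists 0%nat; auto|].
  exists (ones b). split.
  - apply additive_concat_const; [reflexivity | apply length_app | exact Hlens].
  - apply additive_concat_const; [reflexivity | intros; apply count_occ_app |].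
    apply Forall_forall. intros u Hu. exact (proj2 (Hab u b Hu (in_eq b bs))).
Qed.

Lemma abelian_power_exponent_bound (alpha : R) (m e : nat) (w : list bool) :
  0 < alpha < 1 -> in_L alpha w -> abelian_power m e w ->
  INR e * nint_dist (INR m * alpha) < 1.
Proof.
  intros Ha HL Hpow. destruct (abelian_power_ones m e w Hpow) as (c & Hlen & Hones).
  pose proof (in_L_balanced alpha w Ha HL) as Hb.
  rewrite Hlen, Hones, !mult_INR in Hb.
  replace (INR e * INR c - INR e * INR m * alpha)
    with (INR e * (INR c - INR m * alpha)) in Hb by ring.
  rewrite Rabs_mult, Rabs_minus_sym, Rabs_pos_eq in Hb by apply pos_INR.
  pose proof (nint_dist_le_dist (INR m * alpha) (Z.of_nat c)) as Hd.
  rewrite <- INR_IZR_INZ in Hd.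
  pose proof (pos_INR e). nra.
Qed.

Theorem lemma3p1 (alpha : R) (m k : nat) :
  0 < alpha < 1 ->
  irrational alpha ->
  (cf_a alpha 1 >= 2)%nat ->
  (m >= 1)%nat ->
  (k >= 1)%nat ->
  nint_dist (INR m * alpha) >=
    nint_dist (INR (cf_q alpha (k - 1)) * alpha) + nint_dist (INR (cf_q alpha k) * alpha) ->
  forall (e : nat) (w : list bool),
    in_L alpha w -> abelian_power m e w -> (e < cf_q alpha k)%nat.
Proof.
  intros Ha Hirr Ha1 _ Hk Hdist e w HL Hpow.
  pose proof (abelian_power_exponent_bound alpha m e w Ha HL Hpow) as He.
  pose proof (alpha_le_half alpha Ha Ha1) as Hhalf.
  destruct k as [|k]; [lia|].
  replace (S k - 1)%nat with k in Hdist by lia.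
  rewrite !(nint_dist_cf_q alpha Ha Hirr _ Hhalf) in Hdist.
  pose proof (cf_q_dist_sum_ge1 alpha Ha Hirr (S k)) as Hq.
  rewrite cf_delta_prev_S in Hq.
  pose proof (Rabs_pos (cf_delta alpha k)). pose proof (Rabs_pos (cf_delta alpha (S k))).
  apply INR_lt, Rnot_le_lt. intros Hle.
  assert (INR (cf_q alpha (S k)) * (Rabs (cf_delta alpha k) + Rabs (cf_delta alpha (S k)))
          <= INR e * nint_dist (INR m * alpha))
    by (apply Rmult_le_compat; [apply pos_INR | lra | exact Hle | lra]).
  lra.
Qed.
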